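(* If $s,t\in\Sigma^n$ and there exists a symbol that appears in both $s$ and $t$, then $D(P(H(s)-H(t)))\le n-1$.
   Context: Let $k\ge 1$ be an integer, $\Sigma=\{0,1,\dots,k-1\}$, $n\ge 1$. The histogram $H(s):\Sigma\to\mathbb{Z}$ of a string $s$ gives the number of occurrences of each symbol in $s$. For $H:\Sigma\to\mathbb{Z}$, the partial sum is $P(H)(i)=\sum_{j=0}^{i}H(j)$ and the difference is $D(H)=\max_{i,j\in\Sigma}(H(i)-H(j))$. *)

From mathcomp Require Import all_boot all_order all_algebra.
Set Implicit Arguments. Unset Strict Implicit. Unset Printing Implicit Defensive.
Import Order.TTheory GRing.Theory Num.Theory.
Local Open Scope ring_scope.

Definition hist (k n : nat) (s : n.-tuple 'I_k) : 'I_k -> int :=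
  fun a => (count_mem a s)%:Z.

Definition hsub (k : nat) (H1 H2 : 'I_k -> int) : 'I_k -> int :=
  fun a => H1 a - H2 a.

Definition psum (k : nat) (H : 'I_k -> int) : 'I_k -> int :=
  fun i => \sum_(j < k | (j <= i)%N) H j.

(* D(H) = max_{i,j} (H i - H j).  Every term with i = j is 0, so the maximum
   is >= 0 whenever k >= 1 and folding Num.max with initial value 0 gives
   exactly the maximum. *)
Definition Dif (k : nat) (H : 'I_k -> int) : int :=
  \big[Num.max/0]_(i < k) \big[Num.max/0]_(j < k) (H i - H j).

From mathcomp Require Import all_boot all_order all_algebra.
From mathcomp Require Import zify.
Set Implicit Arguments. Unset Strict Implicit. Unset Printing Implicit Defensive.
Import Order.TTheory GRing.Theory Num.Theory.
Local Open Scope ring_scope.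

(* P(H(s) - H(t))(i) counts the letters of s that are <= i minus those of t, so
   P(i) - P(j) for j <= i is the same difference restricted to letters in the
   window (j, i].  Such a difference is at most n, and equality would force
   every letter of s into the window, hence the common symbol too, which then
   contributes at least one letter of t to the window. *)

Lemma sum_count_mem (T : finType) (P : pred T) (s : seq T) :
  (\sum_(j | P j) count_mem j s)%N = count P s.
Proof.
elim: s => [|x s IH] /=; first by rewrite big1.
rewrite big_split /= IH big_mkcond (bigD1 x) //= eqxx big1 => [|j].
  by case: (P x).
by rewrite eq_sym => /negbTE ->; case: (P j).
Qed.

Lemma count_leq_window (T : Type) (f : T -> nat) (j i : nat) (s : seq T) :
  (j <= i)%N ->
  count (fun x => f x <= i)%N s
  = (count (fun x => f x <= j) s + count (fun x => j < f x <= i) s)%N.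
Proof.
move=> ji; elim: s => //= x s ->.
by case: (leqP (f x) j) => [xj | jx] /=; [rewrite (leq_trans xj ji) | case: leqP]; lia.
Qed.

Lemma count_subz_count_le_common (T : eqType) (r : pred T) (s t : seq T) (c : T) :
  c \in s -> c \in t -> (count r s)%:Z - (count r t)%:Z <= (size s).-1%:Z.
Proof.
move=> cs ct; have s_gt0 : (0 < size s)%N by case: s cs.
have [rc | nrc] := boolP (r c).
- have : (0 < count r t)%N by rewrite -has_count; apply/hasP; exists c.
  have := count_size r s; lia.
- have : (0 < count (predC r) s)%N by rewrite -has_count; apply/hasP; exists c.
  have := count_predC r s; lia.
Qed.

Lemma psum_hsub_histE (k n : nat) (s t : n.-tuple 'I_k) (i : 'I_k) :
  psum (hsub (hist s) (hist t)) i
  = (count (fun x : 'I_k => x <= i)%N s)%:Z - (count (fun x : 'I_k => x <= i)%N t)%:Z.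
Proof.
rewrite /psum /hsub /hist sumrB -!sum_count_mem.
by rewrite !(big_morph Posz PoszD erefl).
Qed.

Lemma psum_hsub_hist_subE (k n : nat) (s t : n.-tuple 'I_k) (i j : 'I_k) :
  (j <= i)%N ->
  let P := psum (hsub (hist s) (hist t)) in
  P i - P j = (count (fun x : 'I_k => j < x <= i)%N s)%:Z
              - (count (fun x : 'I_k => j < x <= i)%N t)%:Z.
Proof.
move=> ji /=; rewrite !psum_hsub_histE.
rewrite !(count_leq_window (@nat_of_ord k) _ ji) !PoszD; lia.
Qed.

Theorem lemma6 (k n : nat) (hk : (1 <= k)%N) (hn : (1 <= n)%N)
  (s t : n.-tuple 'I_k)
  (hcommon : exists a : 'I_k, a \in s /\ a \in t) :
  Dif (psum (hsub (hist s) (hist t))) <= (n.-1)%:Z.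
Proof.
case: hcommon => c [cs ct].
apply: bigmax_le => // i _; apply: bigmax_le => // j _.
have [ji | /ltnW ij] := leqP j i.
- rewrite psum_hsub_hist_subE //.
  by have := count_subz_count_le_common _ cs ct; rewrite size_tuple.
- rewrite -opprB psum_hsub_hist_subE // opprB.
  by have := count_subz_count_le_common _ ct cs; rewrite size_tuple.
Qed.
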